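(* For every $k\in\pm\mathcal K^{(\ell)}$ we have $(\chi_k)^\dagger=\chi_{-k}$, and for all $k_1,k_2\in\pm\mathcal K^{(\ell)}$ we have $\chi_{k_1}\chi_{k_2}+\chi_{k_2}\chi_{k_1}=\delta_{k_1,-k_2}\,\mathrm{id}$.
   Context: Fix integers $a<0<b$, $\ell=b-a$, $\mathcal K^{(\ell)}=\{\frac12,\frac32,\dots,\ell-\frac12\}$, $\pm\mathcal K^{(\ell)}=\mathcal K^{(\ell)}\cup(-\mathcal K^{(\ell)})$, $C=\{a,\dots,b\}$, $C^*=\{a+\frac12,\dots,b-\frac12\}$. $\tilde V$ is the complex inner product space with orthonormal basis $(e_\rho)_{\rho\in\{\pm1\}^C}$, $\dagger$ the adjoint. For $x'\in C^*$, $\varsigma_{x'}(\rho)$ flips the signs of $\rho_x$, $x<x'$; $\psi_{x'}e_\rho=\frac{-\rho_{x'-1/2}+i\rho_{x'+1/2}}{\sqrt2}e_{\varsigma_{x'}(\rho)}$, $\psi^*_{x'}e_\rho=\frac{-i\rho_{x'-1/2}+\rho_{x'+1/2}}{\sqrt2}e_{\varsigma_{x'}(\rho)}$. Eigenfunctions: on the lattice strip with vertices $C\times\mathbb Z\subset\mathbb C$ and nearest-neighbour edges (identified with midpoints), a function $F$ is s-holomorphic if $F(z_1)+\frac{i|v-p|}{v-p}\overline{F(z_1)}=F(z_2)+\frac{i|v-p|}{v-p}\overline{F(z_2)}$ for edges $z_1,z_2$ adjacent to a common vertex $v$ and face with centre $p$, and has Riemann boundary values if $F(a+iy')\in e^{-i\pi/4}\mathbb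 R$, $F(b+iy')\in e^{i\pi/4}\mathbb R$. For $k\in\mathcal K^{(\ell)}$ let $\omega_k\in((k-\frac12)\pi/\ell,k\pi/\ell)$ solve $\cos((\ell+\frac12)\omega)/\cos((\ell-\frac12)\omega)=3-2\sqrt2$ and $\lambda_{\pm k}=(2-\cos\omega_k+\sqrt{(3-\cos\omega_k)(1-\cos\omega_k)})^{\pm1}$. $F_{\pm k}$ is the unique s-holomorphic function with Riemann boundary values, $F_{\pm k}(z+ih)=\lambda_{\pm k}^hF_{\pm k}(z)$, values in $e^{-i\pi/4}\mathbb R_{>0}$ on the edges $a+iy'$, and whose restriction $f_{\pm k}$ to $C^*$ (horizontal edges at height $0$) has unit norm in the real Hilbert space $H=\mathbb C^{C^*}$ with $\langle f,g\rangle=\mathrm{Re}\sum_{x'}f(x')\overline{g(x')}$. Known facts: $(f_k)_{k\in\pm\mathcal K^{(\ell)}}$ is an orthonormal basis of $H$ and $f_{-k}=-i\overline{f_k}$. Modes: $\chi_k=\frac{e^{i\pi/4}}{2}\sum_{x'\in C^*}\big(i f_k(x')\psi_{x'}-i\overline{f_k(x')}\psi^*_{x'}\big)$ for $k\in\pm\mathcal K^{(\ell)}$. *)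

From mathcomp Require Import all_boot all_order all_algebra.
From mathcomp Require Import complex.
From mathcomp Require Import reals trigo.

Set Implicit Arguments.
Unset Strict Implicit.
Unset Printing Implicit Defensive.

Import Order.TTheory GRing.Theory Num.Theory ComplexField.
Local Open Scope ring_scope.
Local Open Scope complex_scope.

Definition ell (a b : int) : nat := `|b - a|%N.

Definition eipi4 (R : realType) : R[i] :=
  ((Num.sqrt (2 : R))^-1)%:C * (1 + 'i).

Definition inK (R : realType) (l : nat) (k : R) : Prop :=
  exists j : 'I_l, k = (j%:R : R) + 2^-1.

Definition inPMK (R : realType) (l : nat) (k : R) : Prop :=
  inK l k \/ inK l (- k).

Definition lambda_of (R : realType) (w : R) : R :=
  2 - cos w + Num.sqrt ((3 - cos w) * (1 - cos w)).

(* HE x y : horizontal edge from x + iy to (x+1) + iy, midpoint (x+1/2) + iy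
   VE x y : vertical edge from x + iy to x + i(y+1),  midpoint x + i(y+1/2) *)
Inductive edge := HE of int & int | VE of int & int.

Definition valid_edge (a b : int) (e : edge) : bool :=
  match e with
  | HE x _ => (a <= x) && (x < b)
  | VE x _ => (a <= x) && (x <= b)
  end.

Definition endpoint (e : edge) (vx vy : int) : bool :=
  match e with
  | HE x y => ((vx == x) || (vx == x + 1)) && (vy == y)
  | VE x y => (vx == x) && ((vy == y) || (vy == y + 1))
  end.

(* e is one of the four sides of the face with centre (px+1/2) + i(py+1/2) *)
Definition side (e : edge) (px py : int) : bool :=
  match e with
  | HE x y => (x == px) && ((y == py) || (y == py + 1))
  | VE x y => ((x == px) || (x == px + 1)) && (y == py)
  end.

Definition shift (h : int) (e : edge) : edge :=
  match e with
  | HE x y => HE x (y + h)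
  | VE x y => VE x (y + h)
  end.

Definition s_holomorphic (R : realType) (a b : int) (F : edge -> R[i]) : Prop :=
  forall (z1 z2 : edge) (vx vy px py : int),
    valid_edge a b z1 -> valid_edge a b z2 ->
    (a <= vx <= b) -> (a <= px < b) ->
    endpoint z1 vx vy -> endpoint z2 vx vy ->
    side z1 px py -> side z2 px py ->
    let d : R[i] := ((vx - px)%:~R - 2^-1)%:C + 'i * ((vy - py)%:~R - 2^-1)%:C in
    let c : R[i] := 'i * `|d| / d in
    F z1 + c * (F z1)^* = F z2 + c * (F z2)^*.

Definition riemann_bv (R : realType) (a b : int) (F : edge -> R[i]) : Prop :=
  forall y : int,
    (exists r : R, F (VE a y) = (eipi4 R)^* * r%:C) /\
    (exists r : R, F (VE b y) = eipi4 R * r%:C).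

Definition translation_eigen (R : realType) (a b : int) (F : edge -> R[i])
  (lam : R) : Prop :=
  forall (e : edge) (h : int), valid_edge a b e ->
    F (shift h e) = (lam%:C) ^ h * F e.

Definition left_positive (R : realType) (a : int) (F : edge -> R[i]) : Prop :=
  forall y : int, exists r : R, 0 < r /\ F (VE a y) = (eipi4 R)^* * r%:C.

(* C* = {a+1/2,...,b-1/2}; the point a + j + 1/2 is indexed by j : 'I_l *)

Definition restrict (R : realType) (a : int) (l : nat) (F : edge -> R[i])
  : 'I_l -> R[i] := fun j => F (HE (a + (j : nat)%:Z) 0).

Arguments restrict [R] a l F _.

Definition fmode (R : realType) (a b : int) (F : R -> edge -> R[i]) (k : R)
  : 'I_(ell a b) -> R[i] := restrict a (ell a b) (F k).

Arguments fmode [R] a b F k _.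

Definition innerH (R : realType) (l : nat) (f g : 'I_l -> R[i]) : R :=
  complex.Re (\sum_(j < l) f j * (g j)^*).

(* C = {a,...,b}: the site a + i is indexed by i : 'I_l.+1,             *)
(* and a spin configuration is encoded by booleans (true = +1).          *)
(* Vectors are coordinate functions, operators are matrices              *)
(* A sigma rho = coefficient of e_sigma in A e_rho.                      *)

Definition state (l : nat) := {ffun 'I_l.+1 -> bool}.

Definition spin (R : realType) (s : bool) : R[i] := if s then 1 else -1.

Definition vec (R : realType) (l : nat) := state l -> R[i].
Definition op (R : realType) (l : nat) := state l -> state l -> R[i].

Definition app (R : realType) (l : nat) (A : op R l) (u : vec R l) : vec R l :=
  fun sigma => \sum_(rho : state l) A sigma rho * u rho.

Definition inner (R : realType) (l : nat) (u v : vec R l) : R[i] :=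
  \sum_(rho : state l) (u rho)^* * v rho.

(* the sites x - 1/2 and x + 1/2 around x' = a + j + 1/2 *)
Definition site_left (l : nat) (j : 'I_l) : 'I_l.+1 := widen_ord (leqnSn l) j.
Definition site_right (l : nat) (j : 'I_l) : 'I_l.+1 := lift ord0 j.

(* varsigma_{x'} : flips the spins rho_x, x < x' *)
Definition flip (l : nat) (j : 'I_l) (rho : state l) : state l :=
  [ffun i : 'I_l.+1 => if (i <= j)%N then ~~ rho i else rho i].

Definition psi (R : realType) (l : nat) (j : 'I_l) : op R l :=
  fun sigma rho =>
    (sigma == flip j rho)%:R *
    ((- spin R (rho (site_left j)) + 'i * spin R (rho (site_right j)))
       / (Num.sqrt (2 : R))%:C).

Definition psistar (R : realType) (l : nat) (j : 'I_l) : op R l :=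
  fun sigma rho =>
    (sigma == flip j rho)%:R *
    ((- 'i * spin R (rho (site_left j)) + spin R (rho (site_right j)))
       / (Num.sqrt (2 : R))%:C).

Definition chi (R : realType) (l : nat) (f : 'I_l -> R[i]) : op R l :=
  fun sigma rho =>
    eipi4 R / 2 *
    \sum_(j < l) ('i * f j * psi R j sigma rho - 'i * (f j)^* * psistar R j sigma rho).

(* Each of psi_{x'} and psi*_{x'} sends e_rho to a multiple of e_{varsigma_{x'}(rho)}, so chi_f
   is a sum over x' of spin-flip operators weighted by an amplitude that depends only on f(x')
   and on the two spins rho_{x'-1/2}, rho_{x'+1/2}.  The string varsigma_{m'} reverses both
   spins next to x' < m' and neither next to x' > m', hence negates the amplitude on one side
   only: the cross terms x' <> m' of an anticommutator cancel in pairs, and the diagonal terms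
   add up to the real inner product <f_{k1}, f_{-k2}>, because f_{k2} = -i conj(f_{-k2}).
   Orthonormality then gives the delta.  Conjugating the amplitude of f at varsigma_{x'}(rho)
   gives the amplitude of -i conj(f) at rho, which is the adjoint relation. *)

From mathcomp Require Import all_boot all_order all_algebra.
From mathcomp Require Import complex.
From mathcomp Require Import reals trigo.
From mathcomp Require Import ring.

Set Implicit Arguments.
Unset Strict Implicit.
Unset Printing Implicit Defensive.

Import Order.TTheory GRing.Theory Num.Theory ComplexField.
Local Open Scope ring_scope.

Section ModeAmplitude.
Variable C : numClosedFieldType.

(* The amplitude of a mode with value z at x' when rho_{x'-1/2} = s and rho_{x'+1/2} = t;
   (1 + i) / 4 = e^{i pi/4} / (2 sqrt 2) collects the prefactors of chi, psi and psi*. *)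
Definition mode_amp (z s t : C) : C :=
  - (1 + 'i) / 4 * (s * ('i * z + z^*) + t * (z + 'i * z^*)).

Lemma mode_ampNN z s t : mode_amp z (- s) (- t) = - mode_amp z s t.
Proof. by rewrite /mode_amp; ring. Qed.

Lemma mode_amp_anticomm z1 z2 s t : s * s = 1 -> t * t = 1 ->
  mode_amp z1 (- s) t * mode_amp z2 s t + mode_amp z2 (- s) t * mode_amp z1 s t
  = 'i / 2 * (z1 * z2 - z1^* * z2^*).
Proof. by move=> s2 t2; rewrite /mode_amp; have i2 := mulCii C; field: i2 s2 t2. Qed.

Lemma mode_amp_adj z s t : s^* = s -> t^* = t ->
  mode_amp (- 'i * z^*) s t = (mode_amp z (- s) t)^*.
Proof.
move=> sJ tJ; rewrite /mode_amp.
rewrite !(rmorphM, rmorphD, rmorphN, fmorphV, rmorph_nat, rmorph1) /=.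
by rewrite conjCK conjCi sJ tJ; have i2 := mulCii C; field: i2.
Qed.

End ModeAmplitude.

Section Flip.
Variable l : nat.
Implicit Types (j m : 'I_l) (rho sigma : state l).

Lemma flipK j : involutive (flip j).
Proof.
by move=> rho; apply/ffunP => i; rewrite !ffunE; case: (i <= j)%N; rewrite ?negbK.
Qed.

Lemma flipC j m rho : flip j (flip m rho) = flip m (flip j rho).
Proof. by apply/ffunP => i; rewrite !ffunE; case: (i <= j)%N; case: (i <= m)%N. Qed.

Lemma eq_flipC j sigma rho : (sigma == flip j rho) = (rho == flip j sigma).
Proof. by rewrite -(can2_eq (flipK j) (flipK j)) eq_sym. Qed.

Lemma flip_site_left j m rho :
  flip m rho (site_left j) = if (j <= m)%N then ~~ rho (site_left j) else rho (site_left j).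
Proof. by rewrite ffunE. Qed.

Lemma flip_site_right j m rho :
  flip m rho (site_right j) = if (j < m)%N then ~~ rho (site_right j) else rho (site_right j).
Proof. by rewrite ffunE /= /bump add1n. Qed.

End Flip.

Section Modes.
Variables (R : realType) (l : nat).
Local Notation C := R[i].
Implicit Types (f g h : 'I_l -> C) (j m : 'I_l) (rho sigma : state l).

Lemma spinN b : spin R (~~ b) = - spin R b.
Proof. by case: b; rewrite /spin ?opprK. Qed.

Lemma spin_sqr b : spin R b * spin R b = 1.
Proof. by case: b; rewrite /spin ?mulrNN mulr1. Qed.

Lemma conj_spin b : (spin R b)^* = spin R b.
Proof. by case: b; rewrite /spin ?rmorphN rmorph1. Qed.

Definition chi_amp f j rho : C :=
  mode_amp (f j) (spin R (rho (site_left j))) (spin R (rho (site_right j))).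

Lemma chiE f sigma rho :
  chi f sigma rho = \sum_(j < l) (sigma == flip j rho)%:R * chi_amp f j rho.
Proof.
rewrite /chi mulr_sumr; apply: eq_bigr => j _.
rewrite /psi /psistar /chi_amp /mode_amp /eipi4 fmorphV /=.
set r := ((Num.sqrt 2)%:C)%C.
have r2 : r * r = 2 by rewrite -rmorphM -expr2 sqr_sqrtr ?ler0n // rmorph_nat.
have r0 : r != 0 by rewrite fmorph_eq0 sqrtr_eq0 -ltNge ltr0n.
have i2 := mulCii C.
by field: i2 r2.
Qed.

Lemma chi_amp_flip_lt f j m rho :
  (j < m)%N -> chi_amp f j (flip m rho) = - chi_amp f j rho.
Proof.
move=> jm; rewrite /chi_amp flip_site_left flip_site_right jm ltnW //.
by rewrite !spinN mode_ampNN.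
Qed.

Lemma chi_amp_flip_gt f j m rho :
  (m < j)%N -> chi_amp f j (flip m rho) = chi_amp f j rho.
Proof.
by move=> mj; rewrite /chi_amp flip_site_left flip_site_right leqNgt mj ltnNge ltnW.
Qed.

Lemma chi_amp_flip_cross f g j m sigma : j != m ->
  chi_amp f j (flip j sigma) * chi_amp g m (flip m (flip j sigma))
  + chi_amp g m (flip m sigma) * chi_amp f j (flip j (flip m sigma)) = 0.
Proof.
move=> jm; rewrite [flip m (flip j _)]flipC.
case: (ltngtP j m) => [lt|gt|eq]; last by move: jm; rewrite (val_inj eq) eqxx.
- by rewrite (chi_amp_flip_gt g _ lt) flipC (chi_amp_flip_lt f _ lt); ring.
- by rewrite (chi_amp_flip_lt g _ gt) flipC (chi_amp_flip_gt f _ gt); ring.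
Qed.

Lemma chi_amp_flip_diag f g j sigma :
  chi_amp f j (flip j sigma) * chi_amp g j sigma
  + chi_amp g j (flip j sigma) * chi_amp f j sigma = 'i / 2 * (f j * g j - (f j)^* * (g j)^*).
Proof.
rewrite /chi_amp flip_site_left flip_site_right leqnn ltnn spinN.
exact: mode_amp_anticomm (spin_sqr _) (spin_sqr _).
Qed.

Lemma chi_amp_adj f g j rho : g j = - 'i * (f j)^* ->
  chi_amp g j rho = (chi_amp f j (flip j rho))^*.
Proof.
move=> gE; rewrite /chi_amp flip_site_left flip_site_right leqnn ltnn spinN gE.
exact: mode_amp_adj (conj_spin _) (conj_spin _).
Qed.

Definition op_adj (A : op R l) : op R l := fun sigma rho => (A rho sigma)^*.

Lemma inner_app_adj (A B : op R l) u v :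
  B =2 op_adj A -> inner (app A u) v = inner u (app B v).
Proof.
move=> BE; rewrite /inner /app; under eq_bigr do rewrite rmorph_sum mulr_suml.
rewrite exchange_big; apply: eq_bigr => sigma _; rewrite mulr_sumr.
by apply: eq_bigr => rho _; rewrite BE /op_adj rmorphM mulrCA mulrA.
Qed.

Lemma chi_adj f g : (forall j, g j = - 'i * (f j)^*) -> chi g =2 op_adj (chi f).
Proof.
move=> gE sigma rho; rewrite /op_adj !chiE rmorph_sum; apply: eq_bigr => j _.
rewrite rmorphM rmorph_nat -eq_flipC.
by case: eqP => [->|_]; rewrite ?mul0r // !mul1r (chi_amp_adj _ (gE j)) flipK.
Qed.

Lemma app_chiE f w sigma :
  app (chi f) w sigma = \sum_(j < l) chi_amp f j (flip j sigma) * w (flip j sigma).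
Proof.
rewrite /app; under eq_bigr do rewrite chiE mulr_suml.
rewrite exchange_big; apply: eq_bigr => j _.
rewrite (bigD1 (flip j sigma)) //= flipK eqxx mul1r big1 ?addr0 // => rho.
by rewrite eq_flipC => /negbTE->; rewrite !mul0r.
Qed.

Definition mode_pairing f g : C :=
  \sum_(j < l) 'i / 2 * (f j * g j - (f j)^* * (g j)^*).

Lemma chi_anticomm f g u sigma :
  app (chi f) (app (chi g) u) sigma + app (chi g) (app (chi f) u) sigma
  = mode_pairing f g * u sigma.
Proof.
rewrite !app_chiE; under eq_bigr do rewrite app_chiE mulr_sumr.
under [X in _ + X]eq_bigr do rewrite app_chiE mulr_sumr.
rewrite [X in _ + X]exchange_big -big_split mulr_suml; apply: eq_bigr => j _ /=.
rewrite -big_split (bigD1 j) //= big1 ?addr0 => [|m mj].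
  by rewrite !flipK 2!mulrA -mulrDl chi_amp_flip_diag.
have -> : u (flip j (flip m sigma)) = u (flip m (flip j sigma)) by rewrite flipC.
by rewrite 2!mulrA -mulrDl chi_amp_flip_cross ?mul0r // eq_sym.
Qed.

Lemma mode_pairing_innerH f g h : (forall j, h j = - 'i * (g j)^*) ->
  mode_pairing f h = ((innerH f g)%:C)%C.
Proof.
move=> hE; rewrite /innerH complexRe ReE rmorph_sum -big_split mulr_suml.
apply: eq_bigr => j _; rewrite hE !(rmorphM, rmorphN) /= conjCK conjCi.
by have i2 := mulCii C; field: i2.
Qed.

End Modes.

Lemma inPMKN (R : realType) l (k : R) : inPMK l k -> inPMK l (- k).
Proof. by rewrite /inPMK opprK => -[]; [right | left]. Qed.

Local Open Scope complex_scope.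

Theorem proposition5p5 (R : realType) (a b : int) (ha : a < 0) (hb : 0 < b)
  (omega : R -> R) (F : R -> edge -> R[i]) :
  (* omega_k in ((k-1/2)pi/l, k pi/l) solves
     cos((l+1/2) w)/cos((l-1/2) w) = 3 - 2 sqrt 2 *)
  (forall k : R, inK (ell a b) k ->
     (k - 2^-1) * pi / (ell a b)%:R < omega k < k * pi / (ell a b)%:R /\
     cos (((ell a b)%:R + 2^-1) * omega k) / cos (((ell a b)%:R - 2^-1) * omega k)
       = 3 - 2 * Num.sqrt 2) ->
  (* F_{+-k}: s-holomorphic, Riemann boundary values, F(z+ih) = lambda_{+-k}^h F(z),
     values in e^{-i pi/4} R_{>0} on the edges a + iy', f_{+-k} of unit norm *)
  (forall k : R, inPMK (ell a b) k ->
     s_holomorphic a b (F k) /\ riemann_bv a b (F k) /\ left_positive a (F k) /\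
     innerH (fmode a b F k) (fmode a b F k) = 1) ->
  (forall k : R, inK (ell a b) k ->
     translation_eigen a b (F k) (lambda_of (omega k)) /\
     translation_eigen a b (F (- k)) ((lambda_of (omega k))^-1)) ->
  (* known facts: (f_k) is orthonormal in H, and f_{-k} = -i conj(f_k) *)
  (forall k1 k2 : R, inPMK (ell a b) k1 -> inPMK (ell a b) k2 ->
     innerH (fmode a b F k1) (fmode a b F k2)
       = (k1 == k2)%:R) ->
  (forall (k : R) (j : 'I_(ell a b)), inPMK (ell a b) k ->
     fmode a b F (- k) j = - 'i * (fmode a b F k j)^*) ->
  (* conclusion *)
  (forall k : R, inPMK (ell a b) k ->
     forall u v : vec R (ell a b),
       inner (app (chi (fmode a b F k)) u) v
       = inner u (app (chi (fmode a b F (- k))) v)) /\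
  (forall k1 k2 : R, inPMK (ell a b) k1 -> inPMK (ell a b) k2 ->
     forall (u : vec R (ell a b)) (sigma : state (ell a b)),
       app (chi (fmode a b F k1))
           (app (chi (fmode a b F k2)) u) sigma
     + app (chi (fmode a b F k2))
           (app (chi (fmode a b F k1)) u) sigma
     = (k1 == - k2)%:R * u sigma).
Proof.
move=> _ _ _ orth fneg; split.
  by move=> k kK u v; apply/inner_app_adj/chi_adj => j; exact: fneg.
move=> k1 k2 k1K k2K u sigma; have k2K' := inPMKN k2K.
have fk2E j : fmode a b F k2 j = - 'i * (fmode a b F (- k2) j)^*.
  by rewrite -{1}(opprK k2); exact: fneg.
by rewrite chi_anticomm (mode_pairing_innerH _ fk2E) orth // rmorph_nat.
Qed.
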